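(* Let $\mu,\nu\in\mathbb{R}$, let $U_\sigma=U_\sigma(so_{\mu,\nu}(2,2))$ with coproduct $\Delta$ be as in the context, and define $$\mathcal P=\frac{e^{\sigma P}-1}{\sigma},\quad \mathcal H=H,\quad \mathcal K=K,\quad \mathcal D=D,\quad \mathcal C_1=C_1,\quad \mathcal C_2=C_2+\sigma\mu D^2.$$ Then these elements satisfy the undeformed relations $[\mathcal K,\mathcal H]=\nu\mathcal P$, $[\mathcal K,\mathcal P]=\mu\mathcal H$, $[\mathcal H,\mathcal P]=0$, $[\mathcal D,\mathcal H]=\mathcal H$, $[\mathcal D,\mathcal C_1]=-\mathcal C_1$, $[\mathcal H,\mathcal C_1]=-2\nu\mathcal D$, $[\mathcal D,\mathcal P]=\mathcal P$, $[\mathcal D,\mathcal C_2]=-\mathcal C_2$, $[\mathcal P,\mathcal C_2]=2\mu\mathcal D$, $[\mathcal K,\mathcal C_1]=\nu\mathcal C_2$, $[\mathcal K,\mathcal C_2]=\mu\mathcal C_1$, $[\mathcal K,\mathcal D]=0$, $[\mathcal H,\mathcal C_2]=2\mathcal K$, $[\mathcal P,\mathcal C_1]=-2\mathcal K$, $[\mathcal C_1,\mathcal C_2]=0$, and their coproducts are $$\Delta(\mathcal P)=1\otimes\mathcal P+\mathcal P\otimes 1+\sigma\mathcal P\otimes\mathcal P,\qquad \Delta(\mathcal H)=1\otimes\mathcal H+\mathcal H\otimes 1+\sigma\mathcal H\otimes\mathcal P,$$ $$\Delta(\mathcal D)=1\otimes\mathcal D+\mathcal D\otimes\frac{1}{1+\sigma\mathcal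 P},\qquad \Delta(\mathcal K)=1\otimes\mathcal K+\mathcal K\otimes 1-\sigma\mu\,\mathcal D\otimes\frac{\mathcal H}{1+\sigma\mathcal P},$$ $$\Delta(\mathcal C_1)=1\otimes\mathcal C_1+\mathcal C_1\otimes\frac{1}{1+\sigma\mathcal P}-2\sigma\,\mathcal D\otimes\frac{1}{1+\sigma\mathcal P}\mathcal K+\sigma^2\mu(\mathcal D^2+\mathcal D)\otimes\frac{\mathcal H}{(1+\sigma\mathcal P)^2},$$ $$\Delta(\mathcal C_2)=1\otimes\mathcal C_2+\mathcal C_2\otimes\frac{1}{1+\sigma\mathcal P}+2\sigma\mu\,\mathcal D\otimes\frac{1}{1+\sigma\mathcal P}\mathcal D-\sigma\mu(\mathcal D^2+\mathcal D)\otimes\frac{\sigma\mathcal P}{(1+\sigma\mathcal P)^2}.$$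
   Context: $U_\sigma(so_{\mu,\nu}(2,2))$ denotes the $\sigma$-adically completed associative algebra over $\mathbb{R}[[\sigma]]$ generated by $H,P,K,D,C_1,C_2$ subject to the relations $[K,H]=\nu\frac{e^{\sigma P}-1}{\sigma}$, $[K,P]=\mu e^{-\sigma P}H$, $[H,P]=0$, $[K,D]=0$, $[D,H]=H$, $[D,C_1]=-C_1$, $[H,C_1]=-2\nu D$, $[D,P]=\frac{1-e^{-\sigma P}}{\sigma}$, $[D,C_2]=-C_2-\sigma\mu D^2$, $[P,C_2]=2\mu D$, $[K,C_1]=\nu C_2+\sigma\mu\nu D^2$, $[K,C_2]=\mu C_1$, $[P,C_1]=-e^{-\sigma P}K-Ke^{-\sigma P}$, $[H,C_2]=2K+\sigma\mu(DH+HD)$, $[C_1,C_2]=-\sigma\mu(DC_1+C_1D)$. Its coproduct $\Delta$ is the algebra homomorphism determined by $\Delta(P)=1\otimes P+P\otimes 1$, $\Delta(D)=1\otimes D+D\otimes e^{-\sigma P}$, $\Delta(H)=1\otimes H+H\otimes e^{\sigma P}$, $\Delta(C_2)=1\otimes C_2+C_2\otimes e^{-\sigma P}$, $\Delta(K)=1\otimes K+K\otimes 1-\sigma\mu D\otimes e^{-\sigma P}H$, $\Delta(C_1)=1\otimes C_1+C_1\otimes e^{-\sigma P}-2\sigma D\otimes e^{-\sigma P}K+\sigma^2\mu(D^2+D)\otimes e^{-2\sigma P}H$. Note $1+\sigma\mathcal P=e^{\sigma P}$ is invertible. *)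

From HB Require Import structures.
From mathcomp Require Import all_boot all_order all_algebra.
From mathcomp Require Import reals.
Set Implicit Arguments. Unset Strict Implicit. Unset Printing Implicit Defensive.
Import Order.TTheory GRing.Theory Num.Theory.
Local Open Scope ring_scope.

Definition lie (T : pzRingType) (x y : T) : T := x * y - y * x.

Section SigmaAdic.
Variables (R : realType) (A : algType R) (s : A).

(* s is central (it plays the role of the formal parameter sigma). *)
Definition central : Prop := forall x : A, s * x = x * s.

Definition sdiv (k : nat) (x : A) : Prop := exists y : A, x = s ^+ k * y.

Definition sconv (u : nat -> A) (x : A) : Prop :=
  forall k, exists N, forall n, (N <= n)%N -> sdiv k (x - u n).

Definition ssum (f : nat -> A) (x : A) : Prop :=
  sconv (fun N => \sum_(n < N) f n) x.

Definition sseparated : Prop := forall x : A, (forall k, sdiv k x) -> x = 0.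

Definition scomplete : Prop :=
  forall u : nat -> A,
    (forall k, exists N, forall m n, (N <= m)%N -> (N <= n)%N -> sdiv k (u m - u n)) ->
    exists x, sconv u x.

(* A is a sigma-adically complete (and separated) R[[sigma]]-algebra. *)
Definition sadic_algebra : Prop := [/\ central, sseparated & scomplete].

End SigmaAdic.

Definition alg_hom (R : realType) (A B : algType R) (f : A -> B) : Prop :=
  [/\ forall x y, f (x + y) = f x + f y,
      forall x y, f (x * y) = f x * f y,
      f 1 = 1 &
      forall (a : R) x, f (a *: x) = a *: f x].

(* terms of the series exp(c s X) = sum_n c^n s^n X^n / n!  and
   (exp(c s X) - 1)/(c s) = sum_n c^n s^n X^(n+1) / (n+1)!  (c = 1 or -1) *)
Definition exp_term (R : realType) (A : algType R) (c : R) (s X : A) (n : nat) : A :=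
  (c ^+ n / (n`!)%:R) *: (s ^+ n * X ^+ n).
Definition expm1_div_term (R : realType) (A : algType R) (c : R) (s X : A) (n : nat) : A :=
  (c ^+ n / (n.+1`!)%:R) *: (s ^+ n * X ^+ n.+1).

From HB Require Import structures.
From mathcomp Require Import all_boot all_order all_algebra.
From mathcomp Require Import reals.
Import Order.TTheory GRing.Theory Num.Theory.
Local Open Scope ring_scope.
Set Implicit Arguments. Unset Strict Implicit. Unset Printing Implicit Defensive.

(* All the series involved are power series in the single element P, so everything reduces
   to two facts about E = e^{sP} and Pc = (e^{sP} - 1)/s.  The first is the addition law
   Pc(x + y) = Pc(x) + Pc(y) e^{sx} for commuting x and y, a Cauchy product followed by the
   binomial theorem: at x = P, y = -P it gives Q E = Pc and Ei E = 1, and at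
   x = 1 (x) P, y = P (x) 1 it gives the coproduct of Pc.  The second is that if
   [P, X] = F, [P, F] = 2 G and G commutes with P, then [P^(n+1), X] has only the two terms
   (n+1) P^n F - (n+1) n P^(n-1) G, whence [Pc, X] = E F - s E G.  In particular
   [X, Pc] = E [X, P] and E X Ei = X - s [X, P] whenever [X, P] commutes with P, and with
   these the deformed relations collapse to the undeformed ones. *)

Section Commutator.
Variable T : pzRingType.
Implicit Types x y z : T.

Lemma lie_comm x y : GRing.comm x y -> lie x y = 0.
Proof. by rewrite /lie => ->; rewrite subrr. Qed.

Lemma lie0_comm x y : lie x y = 0 -> GRing.comm x y.
Proof. by move/eqP; rewrite subr_eq0 => /eqP. Qed.

Lemma mulrC_lie x y : x * y = y * x + lie x y.
Proof. by rewrite /lie addrC subrK. Qed.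

Lemma lieN x y : lie x y = - lie y x.
Proof. by rewrite /lie opprB. Qed.

Lemma lieDr x y z : lie x (y + z) = lie x y + lie x z.
Proof. by rewrite /lie mulrDr mulrDl opprD addrACA. Qed.

Lemma lieNr x y : lie x (- y) = - lie x y.
Proof. by rewrite /lie mulrN mulNr opprB opprK addrC. Qed.

Lemma lieMr x y z : lie x (y * z) = lie x y * z + y * lie x z.
Proof. by rewrite /lie mulrBl mulrBr !mulrA addrA subrK. Qed.

Lemma lieMl x y z : lie (x * y) z = x * lie y z + lie x z * y.
Proof. by rewrite /lie mulrBr mulrBl !mulrA addrA subrK. Qed.

Lemma lieMr_comm s x y : GRing.comm s x -> lie x (s * y) = s * lie x y.
Proof. by move=> sx; rewrite /lie mulrBr !mulrA sx. Qed.

Lemma lieMl_comm s x y : GRing.comm s y -> lie (s * x) y = s * lie x y.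
Proof. by move=> sy; rewrite /lie mulrBr !mulrA sy. Qed.

Lemma mulr_lie_inv u v x : u * v = 1 -> u * x * v = x - lie x u * v.
Proof. by move=> uv; rewrite /lie mulrBl -[x * u * v]mulrA uv mulr1 opprB addrC subrK. Qed.

Lemma lieX_r x p z : lie x p = z -> GRing.comm p z ->
  forall n, lie x (p ^+ n.+1) = p ^+ n * z *+ n.+1.
Proof.
move=> xp pz; elim=> [|n IH]; first by rewrite expr0 mul1r.
by rewrite exprSr lieMr IH xp mulrnAl -mulrA -pz mulrA -exprSr -mulrSr.
Qed.

Lemma lieX_l p x f g : lie p x = f -> lie p f = g *+ 2 -> GRing.comm p g ->
  forall n, lie (p ^+ n.+1) x = p ^+ n * f *+ n.+1 - p ^+ n.-1 * g *+ (n.+1 * n).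
Proof.
move=> px pf pg.
have fp : lie f p = - (g *+ 2) by rewrite lieN pf.
have fpn := lieX_r fp (commrN (commrMn 2 pg)).
elim=> [|n IH]; first by rewrite expr0 mul1r muln0 mulr0n subr0.
have e : p * p ^+ n.-1 * g *+ (n.+1 * n) = p ^+ n * g *+ (n.+1 * n).
  by case: n {IH} => [|n]; rewrite ?muln0 // -exprS.
rewrite exprS lieMl IH px (mulrC_lie f) fpn mulrBr !mulrnAr !mulrA e -exprS /=.
rewrite mulrN mulrnAr mulNrn -mulrnA addrACA -mulrSr -opprD -mulrnDr.
by rewrite [(2 * _)%N]mulnC -mulnDr addn2 mulnC.
Qed.

End Commutator.

Section AlgCommutator.
Variables (R : pzRingType) (A : algType R).
Implicit Types x y : A.

Lemma lieZr x (a : R) y : lie x (a *: y) = a *: lie x y.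
Proof. by rewrite /lie -scalerAr -scalerAl scalerBr. Qed.

Lemma lieZl x (a : R) y : lie (a *: x) y = a *: lie x y.
Proof. by rewrite /lie -scalerAr -scalerAl scalerBr. Qed.

Lemma commrZ x (a : R) y : GRing.comm x y -> GRing.comm x (a *: y).
Proof. by rewrite /GRing.comm -scalerAl -scalerAr => ->. Qed.

(* The square of Delta D = 1 (x) D + D (x) Ei, the twist being [D, Ei] = Ei^2 - Ei. *)
Lemma sqr_add_twisted (d1 d2 e : A) : GRing.comm d1 d2 -> GRing.comm d1 e ->
  lie d2 e = e ^+ 2 - e ->
  (d2 + d1 * e) ^+ 2 =
  d2 ^+ 2 + d1 ^+ 2 * e + (d1 * (e * d2) *+ 2 - (d1 ^+ 2 + d1) * (e - e ^+ 2)).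
Proof.
move=> d12 d1e d2e.
have cross : d2 * (d1 * e) = d1 * (e * d2) + d1 * (e ^+ 2 - e).
  by rewrite mulrA -d12 -mulrA (mulrC_lie d2) d2e mulrDr.
have sqr1 : d1 * e * (d1 * e) = d1 ^+ 2 * e ^+ 2.
  by rewrite mulrA -[d1 * e * d1]mulrA -d1e mulrA -expr2 -mulrA -expr2.
have diag : d1 ^+ 2 * e - (d1 ^+ 2 + d1) * (e - e ^+ 2) = d1 ^+ 2 * e ^+ 2 + d1 * (e ^+ 2 - e).
  by rewrite mulrDl !mulrBr opprD !opprB addrA subrKC.
rewrite expr2 mulrDl ![in LHS]mulrDr -expr2 cross sqr1 -mulrA.
rewrite -[RHS]addrA [d1 ^+ 2 * e + _]addrCA diag -addrA addrACA -mulr2n.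
by rewrite [d1 * _ + d1 ^+ 2 * _]addrC.
Qed.

End AlgCommutator.

Lemma sum_cauchy (T : pzSemiRingType) (a b : nat -> T) N :
  \sum_(n < N) \sum_(i < n.+1) a i * b (n - i)%N =
  \sum_(i < N) a i * \sum_(j < N - i) b j.
Proof.
elim: N => [|N IH]; first by rewrite !big_ord0.
rewrite big_ord_recr /= IH [X in _ + X = _]big_ord_recr /= subnn.
rewrite [RHS]big_ord_recr /= subSnn big_ord1 addrA; congr (_ + _).
rewrite -big_split /=; apply: eq_bigr => i _.
by rewrite subSn ?(ltnW (ltn_ord i)) // big_ord_recr /= mulrDr.
Qed.

Lemma bin_div_fact (F : numFieldType) n i : (i <= n)%N ->
  'C(n, i)%:R / n`!%:R = ((i`! * (n - i)`!)%:R)^-1 :> F.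
Proof.
move=> le_in; rewrite -(bin_fact le_in) natrM invfM mulrA mulfV ?mul1r //.
by rewrite pnatr_eq0 -lt0n bin_gt0.
Qed.

Lemma factS_invM (F : numFieldType) n : (n.+1)`!%:R^-1 * n.+1%:R = n`!%:R^-1 :> F.
Proof. by rewrite factS natrM invfM mulrAC mulVf ?mul1r // pnatr_eq0. Qed.

Section SadicSeries.
Variables (R : realType) (A : algType R) (s : A).
Hypothesis s_central : central s.

Lemma commr_sX n x : GRing.comm (s ^+ n) x.
Proof. exact/commr_sym/commrX/commr_sym. Qed.

Lemma sdivD k x y : sdiv s k x -> sdiv s k y -> sdiv s k (x + y).
Proof. by move=> [a ->] [b ->]; exists (a + b); rewrite mulrDr. Qed.

Lemma sdivN k x : sdiv s k x -> sdiv s k (- x).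
Proof. by move=> [a ->]; exists (- a); rewrite mulrN. Qed.

Lemma sdivMr k x y : sdiv s k x -> sdiv s k (x * y).
Proof. by move=> [a ->]; exists (a * y); rewrite mulrA. Qed.

Lemma sdivMl k x y : sdiv s k x -> sdiv s k (y * x).
Proof. by move=> [a ->]; exists (y * a); rewrite mulrA -commr_sX -mulrA. Qed.

Lemma sdivM i j x y : sdiv s i x -> sdiv s j y -> sdiv s (i + j) (x * y).
Proof.
move=> [a ->] [b ->]; exists (a * b).
by rewrite exprD -mulrA [a * _]mulrA -commr_sX !mulrA.
Qed.

Lemma sdiv_leq j k x : (j <= k)%N -> sdiv s k x -> sdiv s j x.
Proof. by move=> le_jk [a ->]; exists (s ^+ (k - j) * a); rewrite mulrA -exprD subnKC. Qed.

Lemma sdiv_sum k (I : Type) (r : seq I) (P : pred I) (F : I -> A) :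
  (forall i, P i -> sdiv s k (F i)) -> sdiv s k (\sum_(i <- r | P i) F i).
Proof.
move=> sdivF; elim/big_ind: _ => //; last exact: sdivD.
by exists 0; rewrite mulr0.
Qed.

Lemma sconv_cst x : sconv s (fun=> x) x.
Proof. by move=> k; exists 0%N => n _; exists 0; rewrite subrr mulr0. Qed.

Lemma sconv_near u v x : sconv s u x ->
  (forall k, exists N, forall n, (N <= n)%N -> sdiv s k (u n - v n)) -> sconv s v x.
Proof.
move=> ux uv k; have [N1 h1] := ux k; have [N2 h2] := uv k.
exists (maxn N1 N2) => n; rewrite geq_max => /andP[/h1 ? /h2 ?].
by rewrite -[x](subrK (u n)) -addrA; apply: sdivD.
Qed.

Lemma sconvN u x : sconv s u x -> sconv s (fun n => - u n) (- x).
Proof. by move=> ux k; have [N h] := ux k; exists N => n /h /sdivN; rewrite opprD. Qed.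

Lemma sconvD u v x y : sconv s u x -> sconv s v y ->
  sconv s (fun n => u n + v n) (x + y).
Proof.
move=> ux vy k; have [N1 h1] := ux k; have [N2 h2] := vy k.
exists (maxn N1 N2) => n; rewrite geq_max => /andP[/h1 ? /h2 ?].
by rewrite opprD addrACA; apply: sdivD.
Qed.

Lemma sconvM u v x y : sconv s u x -> sconv s v y ->
  sconv s (fun n => u n * v n) (x * y).
Proof.
move=> ux vy k; have [N1 h1] := ux k; have [N2 h2] := vy k.
exists (maxn N1 N2) => n; rewrite geq_max => /andP[/h1 ? /h2 ?].
have -> : x * y - u n * v n = (x - u n) * y + u n * (y - v n).
  by rewrite mulrBl mulrBr addrA subrK.
by apply: sdivD; [apply: sdivMr | apply: sdivMl].
Qed.

Lemma sconv_eq u v x : u =1 v -> sconv s u x -> sconv s v x.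
Proof. by move=> uv ux k; have [N h] := ux k; exists N => n; rewrite -uv; apply: h. Qed.

Lemma ssum_ext f g x : f =1 g -> ssum s f x -> ssum s g x.
Proof. by move=> fg; apply: sconv_eq => N; apply: eq_bigr => i _. Qed.

Lemma ssum0 : ssum s (fun=> 0) 0.
Proof. by apply: sconv_eq (sconv_cst 0) => N; rewrite big1. Qed.

Lemma ssumD f g x y : ssum s f x -> ssum s g y -> ssum s (fun n => f n + g n) (x + y).
Proof. by move=> fx gy; apply: sconv_eq (sconvD fx gy) => N; rewrite big_split. Qed.

Lemma ssumN f x : ssum s f x -> ssum s (fun n => - f n) (- x).
Proof. by move=> fx; apply: sconv_eq (sconvN fx) => N; rewrite sumrN. Qed.

Lemma ssumMl y f x : ssum s f x -> ssum s (fun n => y * f n) (y * x).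
Proof. by move=> fx; apply: sconv_eq (sconvM (sconv_cst y) fx) => N; rewrite mulr_sumr. Qed.

Lemma ssumMr y f x : ssum s f x -> ssum s (fun n => f n * y) (x * y).
Proof. by move=> fx; apply: sconv_eq (sconvM fx (sconv_cst y)) => N; rewrite mulr_suml. Qed.

Lemma ssum_cons y f x : ssum s f x ->
  ssum s (fun n => if n is m.+1 then f m else y) (y + x).
Proof.
move=> fx k; have [N h] := sconvD (sconv_cst y) fx k.
by exists N.+1 => -[//|n] /h; rewrite big_ord_recl.
Qed.

Lemma sdiv_sum_tail (b : nat -> A) M d : (forall n, sdiv s n (b n)) ->
  sdiv s M (\sum_(j < M + d) b j - \sum_(j < M) b j).
Proof.
move=> sdiv_b; elim: d => [|d IH]; first by rewrite addn0 subrr; exists 0; rewrite mulr0.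
rewrite addnS big_ord_recr /= addrAC; apply: sdivD => //.
exact: sdiv_leq (leq_addr _ _) (sdiv_b _).
Qed.

Lemma ssum_cauchy a b x y :
  (forall n, sdiv s n (a n)) -> (forall n, sdiv s n (b n)) ->
  ssum s a x -> ssum s b y ->
  ssum s (fun n => \sum_(i < n.+1) a i * b (n - i)%N) (x * y).
Proof.
move=> sdiv_a sdiv_b ax by_; apply: sconv_near (sconvM ax by_) _ => k.
exists k => N le_kN; apply: (sdiv_leq le_kN).
rewrite sum_cauchy big_distrl /= -sumrB; apply: sdiv_sum => i _.
rewrite -mulrBr; have := sdivM (sdiv_a i) (sdiv_sum_tail (N - i) i sdiv_b).
by rewrite subnK ?subnKC // ltnW.
Qed.

Hypothesis s_separated : sseparated s.

Lemma ssum_unique f x y : ssum s f x -> ssum s f y -> x = y.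
Proof.
move=> fx fy; apply/eqP; rewrite -subr_eq0; apply/eqP/s_separated => k.
have [N1 h1] := fx k; have [N2 h2] := fy k.
have := sdivD (h1 _ (leq_maxl N1 N2)) (sdivN (h2 _ (leq_maxr N1 N2))).
by rewrite opprB addrA subrK.
Qed.

Lemma sdiv_sterm (a : R) n x : sdiv s n (a *: (s ^+ n * x)).
Proof. by exists (a *: x); rewrite scalerAr. Qed.

Lemma sterm_mul (a b : R) i j x y :
  (a *: (s ^+ i * x)) * (b *: (s ^+ j * y)) = (a * b) *: (s ^+ (i + j) * (x * y)).
Proof.
rewrite -scalerAl -scalerAr scalerA exprD -!mulrA; congr (_ *: (_ * _)).
by rewrite !mulrA commr_sX.
Qed.

Lemma commr_ssum y f X : (forall n, GRing.comm y (f n)) -> ssum s f X -> GRing.comm y X.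
Proof.
move=> yf fX; apply: ssum_unique (ssumMl y fX) _.
by apply: ssum_ext (ssumMr y fX) => n; rewrite yf.
Qed.

Lemma commr_sterm y x (a : R) n m : GRing.comm y x -> GRing.comm y (a *: (s ^+ n * x ^+ m)).
Proof.
move=> yx; rewrite /GRing.comm -scalerAl -scalerAr mulrA -commr_sX -!mulrA.
by rewrite (commrX m yx).
Qed.

Lemma commr_exp_sum c x y X : GRing.comm y x -> ssum s (exp_term c s x) X -> GRing.comm y X.
Proof. by move=> yx; apply: commr_ssum => n; apply: commr_sterm. Qed.

Lemma commr_expm1_div_sum c x y X :
  GRing.comm y x -> ssum s (expm1_div_term c s x) X -> GRing.comm y X.
Proof. by move=> yx; apply: commr_ssum => n; apply: commr_sterm. Qed.

Lemma exp_termN x n : exp_term (-1) s x n = exp_term 1 s (- x) n.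
Proof.
rewrite /exp_term -[- x]scaleN1r exprZn -scalerAr scalerA expr1n mul1r.
by rewrite mulrC.
Qed.

Lemma expm1_div_termN x n : expm1_div_term (-1) s x n = - expm1_div_term 1 s (- x) n.
Proof.
rewrite /expm1_div_term -[- x]scaleN1r exprZn -scalerAr scalerA expr1n mul1r.
by rewrite [(-1) ^+ n.+1]exprS mulN1r mulrN scaleNr opprK mulrC.
Qed.

Lemma exp_sum_shift x Ex Pcx : ssum s (exp_term 1 s x) Ex ->
  ssum s (expm1_div_term 1 s x) Pcx -> Ex = 1 + s * Pcx.
Proof.
move=> Ex_sum Pcx_sum; apply: ssum_unique Ex_sum _.
apply: ssum_ext (ssum_cons 1 (ssumMl s Pcx_sum)) => -[|n].
  by rewrite /exp_term !expr0 mul1r invr1 mulr1 scale1r.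
by rewrite /exp_term /expm1_div_term -scalerAr mulrA -exprS !expr1n.
Qed.

Lemma expm1_div_sum0 : ssum s (expm1_div_term 1 s 0) 0.
Proof. by apply: ssum_ext ssum0 => n; rewrite /expm1_div_term expr0n mulr0 scaler0. Qed.

Lemma expm1_div_sumD x y Ex Pcx Pcy Pcxy : GRing.comm x y ->
  ssum s (exp_term 1 s x) Ex -> ssum s (expm1_div_term 1 s x) Pcx ->
  ssum s (expm1_div_term 1 s y) Pcy -> ssum s (expm1_div_term 1 s (x + y)) Pcxy ->
  Pcxy = Pcx + Pcy * Ex.
Proof.
move=> xy Ex_sum Pcx_sum Pcy_sum Pcxy_sum; apply: ssum_unique Pcxy_sum _.
have := ssum_cauchy (fun n => sdiv_sterm _ n _) (fun n => sdiv_sterm _ n _) Pcy_sum Ex_sum.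
move=> /(ssumD Pcx_sum); apply: ssum_ext => n.
rewrite /expm1_div_term (exprDn_comm _ xy) [in RHS]big_ord_recl subn0 expr0 mulr1 bin0.
rewrite mulr1n mulrDr mulr_sumr scalerDr scaler_sumr; congr (_ + _).
apply: eq_bigr => i _; have le_in : (i <= n)%N by rewrite -ltnS.
rewrite lift0 sterm_mul subnKC // subSS (commrX _ (commr_sym (commrX _ xy))).
rewrite mulrnAr -scaler_nat scalerA; congr (_ *: _).
by rewrite !expr1n !mul1r [RHS]mulrC bin_div_fact // subSS natrM invfM.
Qed.

Lemma lie_expm1_div_sum x X F G Ex Pcx :
  lie x X = F -> lie x F = G *+ 2 -> GRing.comm x G ->
  ssum s (exp_term 1 s x) Ex -> ssum s (expm1_div_term 1 s x) Pcx ->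
  lie Pcx X = Ex * F - s * (Ex * G).
Proof.
move=> xX xF xG Ex_sum Pcx_sum.
apply: ssum_unique (ssumD (ssumMr X Pcx_sum) (ssumN (ssumMl X Pcx_sum))) _.
have := ssum_cons 0 (ssumMl s (ssumMr G Ex_sum)); rewrite add0r => /ssumN.
move=> /(ssumD (ssumMr F Ex_sum)); apply: ssum_ext => n.
rewrite -[_ * X - _]/(lie _ X) /expm1_div_term /exp_term lieZl.
rewrite (lieMl_comm _ (commr_sX n X)) (lieX_l xX xF xG) !expr1n.
case: n => [|n].
  by rewrite !expr0 !mul1r mulr0n !subr0 -scalerAl mul1r.
rewrite mulrBr scalerBr -!scalerAl -scalerAr !mulrnAr -!scaler_nat !scalerA.
rewrite !expr1n -!mulrA [s * (s ^+ n * _)]mulrA -exprS.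
congr (_ *: _ - _ *: _); first by rewrite !mul1r factS_invM.
by rewrite !mul1r natrM mulrA !factS_invM.
Qed.

Lemma lie_expm1_div_sum_r X x Z Ex Pcx : lie X x = Z -> GRing.comm x Z ->
  ssum s (exp_term 1 s x) Ex -> ssum s (expm1_div_term 1 s x) Pcx ->
  lie X Pcx = Ex * Z.
Proof.
move=> Xx xZ Ex_sum Pcx_sum.
have xX : lie x X = - Z by rewrite lieN Xx.
have xZ' : lie x (- Z) = 0 *+ 2 by rewrite lieNr lie_comm // oppr0 mul0rn.
rewrite lieN (lie_expm1_div_sum xX xZ' (commr0 x) Ex_sum Pcx_sum).
by rewrite !mulr0 subr0 mulrN opprK.
Qed.

Lemma lie_exp_sum_r X x Z Ex Pcx : lie X x = Z -> GRing.comm x Z ->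
  ssum s (exp_term 1 s x) Ex -> ssum s (expm1_div_term 1 s x) Pcx ->
  lie X Ex = s * (Ex * Z).
Proof.
move=> Xx xZ Ex_sum Pcx_sum; rewrite [in LHS](exp_sum_shift Ex_sum Pcx_sum).
rewrite lieDr (lie_comm (commr1 X)) add0r (lieMr_comm _ (s_central X)).
by rewrite (lie_expm1_div_sum_r Xx xZ Ex_sum Pcx_sum).
Qed.

End SadicSeries.

Section AlgHom.
Variables (R : realType) (A B : algType R) (f : A -> B).
Hypothesis f_hom : alg_hom f.

Lemma alg_homD x y : f (x + y) = f x + f y. Proof. by case: f_hom. Qed.
Lemma alg_homM x y : f (x * y) = f x * f y. Proof. by case: f_hom. Qed.
Lemma alg_hom1 : f 1 = 1. Proof. by case: f_hom. Qed.
Lemma alg_homZ (a : R) x : f (a *: x) = a *: f x. Proof. by case: f_hom. Qed.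

Lemma alg_homN x : f (- x) = - f x.
Proof. by rewrite -scaleN1r alg_homZ scaleN1r. Qed.

Lemma alg_homB x y : f (x - y) = f x - f y.
Proof. by rewrite alg_homD alg_homN. Qed.

Lemma alg_homX x n : f (x ^+ n) = f x ^+ n.
Proof. by elim: n => [|n IH]; rewrite ?alg_hom1 // !exprS alg_homM IH. Qed.

Lemma ssum_alg_hom (s : A) F x : ssum s F x -> ssum (f s) (fun n => f (F n)) (f x).
Proof.
have f0 : f 0 = 0 by rewrite -(subrr 0) alg_homB subrr.
move=> Fx k; have [N h] := Fx k; exists N => n /h [y xF]; exists (f y).
by rewrite -alg_homX -alg_homM -xF alg_homB (big_morph f alg_homD f0).
Qed.

Lemma exp_sum_alg_hom (c : R) s x X :
  ssum s (exp_term c s x) X -> ssum (f s) (exp_term c (f s) (f x)) (f X).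
Proof.
by move/ssum_alg_hom; apply: ssum_ext => n; rewrite /exp_term alg_homZ alg_homM !alg_homX.
Qed.

Lemma expm1_div_sum_alg_hom (c : R) s x X :
  ssum s (expm1_div_term c s x) X -> ssum (f s) (expm1_div_term c (f s) (f x)) (f X).
Proof.
by move/ssum_alg_hom; apply: ssum_ext => n; rewrite /expm1_div_term alg_homZ alg_homM !alg_homX.
Qed.

End AlgHom.

Section DeformedSO22.
Variables (R : realType) (mu nu : R) (A : algType R).
Variables (s H P K D C1 C2 E Ei Pc Q : A).
Hypotheses (s_central : central s) (s_separated : sseparated s).
Hypotheses (E_sum : ssum s (exp_term 1 s P) E) (Ei_sum : ssum s (exp_term (-1) s P) Ei).
Hypotheses (Pc_sum : ssum s (expm1_div_term 1 s P) Pc).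
Hypotheses (Q_sum : ssum s (expm1_div_term (-1) s P) Q).

Lemma Ei_sum_oppr : ssum s (exp_term 1 s (- P)) Ei.
Proof. exact: ssum_ext (exp_termN s P) Ei_sum. Qed.

Lemma Q_sum_oppr : ssum s (expm1_div_term 1 s (- P)) (- Q).
Proof. by apply: ssum_ext (ssumN Q_sum) => n; rewrite expm1_div_termN opprK. Qed.

Lemma E_shift : E = 1 + s * Pc.
Proof. exact: exp_sum_shift. Qed.

Lemma Ei_shift : Ei = 1 - s * Q.
Proof. by rewrite (exp_sum_shift s_central s_separated Ei_sum_oppr Q_sum_oppr) mulrN. Qed.

Lemma commr_E y : GRing.comm y P -> GRing.comm y E.
Proof. by move=> yP; apply: commr_exp_sum E_sum. Qed.

Lemma commr_Ei y : GRing.comm y P -> GRing.comm y Ei.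
Proof. by move=> yP; apply: commr_exp_sum Ei_sum. Qed.

Lemma commr_Pc y : GRing.comm y P -> GRing.comm y Pc.
Proof. by move=> yP; apply: commr_expm1_div_sum Pc_sum. Qed.

Lemma commr_Q y : GRing.comm y P -> GRing.comm y Q.
Proof. by move=> yP; apply: commr_expm1_div_sum Q_sum. Qed.

Lemma Q_E : Q * E = Pc.
Proof.
have Pc0 : ssum s (expm1_div_term 1 s (P + - P)) 0 by rewrite subrr; apply: expm1_div_sum0.
have := expm1_div_sumD s_central s_separated (commrN (commr_refl P)) E_sum Pc_sum Q_sum_oppr Pc0.
by move/eqP; rewrite eq_sym mulNr subr_eq0 => /eqP.
Qed.

Lemma Ei_E : Ei * E = 1.
Proof. by rewrite Ei_shift mulrBl mul1r -mulrA Q_E {1}E_shift addrK. Qed.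

Lemma E_Ei : E * Ei = 1.
Proof. by rewrite -(commr_E (commr_sym (commr_Ei (commr_refl P)))) Ei_E. Qed.

Lemma E_EiK X : E * (Ei * X) = X.
Proof. by rewrite mulrA E_Ei mul1r. Qed.

Lemma conj_E X Z : lie X P = Z -> GRing.comm P Z -> E * (X * Ei) = X - s * Z.
Proof.
move=> XP PZ; rewrite mulrA (mulr_lie_inv _ E_Ei).
rewrite (lie_exp_sum_r s_central s_separated XP PZ E_sum Pc_sum).
by rewrite -(commr_E (commr_sym PZ)) -!mulrA E_Ei mulr1.
Qed.

Hypotheses (KH : lie K H = nu *: Pc) (KP : lie K P = mu *: (Ei * H)) (HP : lie H P = 0).
Hypotheses (KD : lie K D = 0) (DH : lie D H = H) (DC1 : lie D C1 = - C1).
Hypotheses (HC1 : lie H C1 = - ((2 * nu) *: D)) (DP : lie D P = Q).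
Hypotheses (DC2 : lie D C2 = - C2 - mu *: (s * D ^+ 2)) (PC2 : lie P C2 = (2 * mu) *: D).
Hypotheses (KC1 : lie K C1 = nu *: C2 + (mu * nu) *: (s * D ^+ 2)) (KC2 : lie K C2 = mu *: C1).
Hypotheses (PC1 : lie P C1 = - (Ei * K) - K * Ei).
Hypotheses (HC2 : lie H C2 = K *+ 2 + mu *: (s * (D * H + H * D))).
Hypotheses (C1C2 : lie C1 C2 = - (mu *: (s * (D * C1 + C1 * D)))).

Let C2c := C2 + mu *: (s * D ^+ 2).

Let commPEi : GRing.comm P Ei := commr_Ei (commr_refl P).
Let commPQ : GRing.comm P Q := commr_Q (commr_refl P).
Let commHP : GRing.comm H P := lie0_comm HP.
Let commPEiH : GRing.comm P (mu *: (Ei * H)) := commrZ mu (commrM commPEi (commr_sym commHP)).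

Lemma lie_C2c X : lie X C2c = lie X C2 + mu *: (s * (lie X D * D + D * lie X D)).
Proof. by rewrite /C2c lieDr lieZr (lieMr_comm _ (s_central X)) expr2 lieMr. Qed.

Lemma lie_K_Pc : lie K Pc = mu *: H.
Proof.
rewrite (lie_expm1_div_sum_r s_central s_separated KP commPEiH E_sum Pc_sum).
by rewrite -scalerAr (E_EiK H).
Qed.

Lemma lie_H_Pc : lie H Pc = 0.
Proof. exact/lie_comm/commr_Pc. Qed.

Lemma lie_D_Pc : lie D Pc = Pc.
Proof.
rewrite (lie_expm1_div_sum_r s_central s_separated DP commPQ E_sum Pc_sum).
by rewrite -(commr_E (commr_sym commPQ)) Q_E.
Qed.

Lemma lie_D_C2c : lie D C2c = - C2c.
Proof. by rewrite lie_C2c DC2 lie_comm // mul0r mulr0 addr0 mulr0 scaler0 addr0 opprD. Qed.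

Lemma lie_K_C1 : lie K C1 = nu *: C2c.
Proof. by rewrite KC1 scalerDr scalerA mulrC. Qed.

Lemma lie_K_C2c : lie K C2c = mu *: C1.
Proof. by rewrite lie_C2c KC2 KD mul0r mulr0 addr0 mulr0 scaler0 addr0. Qed.

Lemma lie_H_C2c : lie H C2c = K *+ 2.
Proof.
rewrite lie_C2c HC2 (lieN H D) DH mulNr mulrN -opprD [H * D + _]addrC.
by rewrite mulrN scalerN addrK.
Qed.

Lemma lie_C1_C2c : lie C1 C2c = 0.
Proof. by rewrite lie_C2c C1C2 (lieN C1 D) DC1 opprK [C1 * D + _]addrC addNr. Qed.

Lemma sQ : s * Q = 1 - Ei.
Proof. by rewrite Ei_shift subKr. Qed.

Lemma lie_Pc_C2c : lie Pc C2c = (2 * mu) *: D.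
Proof.
have PD : lie P D = - Q by rewrite lieN DP.
have sQD : s * (Q * D + D * Q) = D *+ 2 - (Ei * D + D * Ei).
  rewrite mulrDr !mulrA (s_central D) -[D * s * Q]mulrA sQ mulrBl mulrBr mul1r mulr1.
  by rewrite addrACA -opprD mulr2n.
have PC2c : lie P C2c = mu *: (Ei * D + D * Ei).
  rewrite lie_C2c PC2 PD mulNr mulrN -opprD mulrN sQD opprB scalerBr.
  by rewrite [2 * mu]mulrC -scalerA scaler_nat addrC subrK.
have PF : lie P (mu *: (Ei * D + D * Ei)) = (- (mu *: (Ei * Q))) *+ 2.
  rewrite lieZr lieDr !lieMr (lie_comm commPEi) PD mul0r add0r mulr0 addr0 mulrN mulNr.
  by rewrite (commr_Ei (commr_sym commPQ)) -opprD -mulr2n scalerN -scalerMnr mulNrn.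
have PG : GRing.comm P (- (mu *: (Ei * Q))) by apply/commrN/commrZ/commrM.
rewrite (lie_expm1_div_sum s_central s_separated PC2c PF PG E_sum Pc_sum).
rewrite !mulrN opprK -!scalerAr mulrDr !E_EiK (conj_E DP commPQ) -scalerDr addrA subrK.
by rewrite [2 * mu]mulrC -scalerA scaler_nat mulr2n.
Qed.

Lemma lie_Pc_C1 : lie Pc C1 = - (K *+ 2).
Proof.
have PK : lie P K = - (mu *: (Ei * H)) by rewrite lieN KP.
have PF : lie P (- (Ei * K) - K * Ei) = (mu *: (Ei * (Ei * H))) *+ 2.
  rewrite lieDr !lieNr !lieMr (lie_comm commPEi) PK mul0r add0r mulr0 addr0 mulrN mulNr !opprK.
  by rewrite -scalerAr -scalerAl -mulrA (commr_Ei commHP) mulr2n.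
have PG : GRing.comm P (mu *: (Ei * (Ei * H))) by apply/commrZ/commrM/commrM/commr_sym.
rewrite (lie_expm1_div_sum s_central s_separated PC1 PF PG E_sum Pc_sum).
rewrite mulrDr !mulrN (E_EiK K) (conj_E KP commPEiH) -!scalerAr (E_EiK (Ei * H)).
by rewrite opprB addrCA addrAC subrr add0r mulr2n opprD.
Qed.

Lemma lie_D_Ei : lie D Ei = Ei ^+ 2 - Ei.
Proof.
have DEi : D * Ei = Ei * (E * (D * Ei)) by rewrite mulrA Ei_E mul1r.
by rewrite /lie DEi (conj_E DP commPQ) sQ !mulrBr mulr1 addrAC subrr add0r opprB -expr2.
Qed.

Lemma sPc_Ei2 : s * Pc * Ei ^+ 2 = Ei - Ei ^+ 2.
Proof.
have -> : s * Pc = E - 1 by rewrite E_shift addrC addKr.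
by rewrite mulrBl mul1r expr2 mulrA E_Ei mul1r.
Qed.

Lemma undeformed_relations :
  lie K H = nu *: Pc /\ lie K Pc = mu *: H /\ lie H Pc = 0 /\
  lie D H = H /\ lie D C1 = - C1 /\
  lie H C1 = - ((2 * nu) *: D) /\ lie D Pc = Pc /\ lie D C2c = - C2c /\
  lie Pc C2c = (2 * mu) *: D /\ lie K C1 = nu *: C2c /\ lie K C2c = mu *: C1 /\
  lie K D = 0 /\ lie H C2c = K *+ 2 /\ lie Pc C1 = - (K *+ 2) /\
  lie C1 C2c = 0.
Proof.
by repeat split; rewrite ?lie_K_Pc ?lie_H_Pc ?lie_D_Pc ?lie_D_C2c ?lie_Pc_C2c ?lie_K_C1
  ?lie_K_C2c ?lie_H_C2c ?lie_Pc_C1 ?lie_C1_C2c.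
Qed.

Section Coproduct.
Variables (B : algType R) (sB : B) (Delta i1 i2 : A -> B) (w : A).
Hypotheses (sB_central : central sB) (sB_separated : sseparated sB).
Hypotheses (Delta_hom : alg_hom Delta) (i1_hom : alg_hom i1) (i2_hom : alg_hom i2).
Hypotheses (Delta_s : Delta s = sB) (i1_s : i1 s = sB) (i2_s : i2 s = sB).
Hypothesis i12_comm : forall x y, i1 x * i2 y = i2 y * i1 x.
Hypotheses (Delta_P : Delta P = i2 P + i1 P) (Delta_D : Delta D = i2 D + i1 D * i2 Ei).
Hypotheses (Delta_H : Delta H = i2 H + i1 H * i2 E).
Hypothesis (Delta_C2 : Delta C2 = i2 C2 + i1 C2 * i2 Ei).
Hypothesis (Delta_K : Delta K = i2 K + i1 K - mu *: (sB * (i1 D * i2 (Ei * H)))).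
Hypothesis (Delta_C1 : Delta C1 = i2 C1 + i1 C1 * i2 Ei - (sB * (i1 D * i2 (Ei * K))) *+ 2
  + mu *: (sB ^+ 2 * (i1 (D ^+ 2 + D) * i2 (Ei ^+ 2 * H)))).
Hypothesis w_inv : w * (1 + s * Pc) = 1.

Lemma w_Ei : w = Ei.
Proof. by rewrite -[w]mulr1 -E_Ei mulrA E_shift w_inv mul1r. Qed.

Lemma i2_E : i2 E = 1 + sB * i2 Pc.
Proof. by rewrite E_shift alg_homD // alg_hom1 // alg_homM // i2_s. Qed.

Lemma mulr_1_sB x y : x * (1 + sB * y) = x + sB * (x * y).
Proof. by rewrite mulrDr mulr1 mulrA -sB_central -mulrA. Qed.

Lemma Delta_Pc : Delta Pc = i2 Pc + i1 Pc + sB * (i1 Pc * i2 Pc).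
Proof.
have := expm1_div_sum_alg_hom Delta_hom Pc_sum.
have := expm1_div_sum_alg_hom i1_hom Pc_sum.
have := expm1_div_sum_alg_hom i2_hom Pc_sum.
have := exp_sum_alg_hom i2_hom E_sum.
rewrite Delta_s i1_s i2_s Delta_P => E2_sum Pc2_sum Pc1_sum PcD_sum.
have i21 := esym (i12_comm P P).
rewrite (expm1_div_sumD sB_central sB_separated i21 E2_sum Pc2_sum Pc1_sum PcD_sum).
by rewrite i2_E mulr_1_sB addrA.
Qed.

Lemma Delta_H_Pc : Delta H = i2 H + i1 H + sB * (i1 H * i2 Pc).
Proof. by rewrite Delta_H i2_E mulr_1_sB addrA. Qed.

Lemma Delta_C2c : Delta C2c = i2 C2c + i1 C2c * i2 w
  + (mu *: (sB * (i1 D * i2 (w * D)))) *+ 2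
  - mu *: (sB * (i1 (D ^+ 2 + D) * i2 (s * Pc * w ^+ 2))).
Proof.
have d2e : lie (i2 D) (i2 Ei) = i2 Ei ^+ 2 - i2 Ei.
  have := congr1 i2 lie_D_Ei.
  by rewrite /lie !(alg_homB i2_hom) !(alg_homM i2_hom) expr2.
have sqr := sqr_add_twisted (i12_comm D D) (i12_comm D Ei) d2e.
rewrite w_Ei sPc_Ei2 /C2c (alg_homD Delta_hom) (alg_homZ Delta_hom) (alg_homM Delta_hom).
rewrite (alg_homX Delta_hom) Delta_s Delta_C2 Delta_D sqr.
rewrite !(alg_homD i1_hom, alg_homD i2_hom, alg_homZ i1_hom, alg_homZ i2_hom).
rewrite !(alg_homX i1_hom, alg_homX i2_hom, alg_homM i1_hom, alg_homM i2_hom).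
rewrite (alg_homN i2_hom) (alg_homX i2_hom) i1_s i2_s.
rewrite [in LHS]mulrDr [in LHS]scalerDr addrA -[RHS]addrA; congr (_ + _).
  by rewrite mulrDl -scalerAl -[sB * _ * i2 Ei]mulrA mulrDr scalerDr addrACA.
by rewrite mulrBr scalerBr mulrnAr scalerMnr.
Qed.

Lemma coproducts :
  Delta Pc = i2 Pc + i1 Pc + sB * (i1 Pc * i2 Pc) /\
  Delta H = i2 H + i1 H + sB * (i1 H * i2 Pc) /\
  Delta D = i2 D + i1 D * i2 w /\
  Delta K = i2 K + i1 K - mu *: (sB * (i1 D * i2 (H * w))) /\
  Delta C1 = i2 C1 + i1 C1 * i2 w - (sB * (i1 D * i2 (w * K))) *+ 2
             + mu *: (sB ^+ 2 * (i1 (D ^+ 2 + D) * i2 (H * w ^+ 2))) /\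
  Delta C2c = i2 C2c + i1 C2c * i2 w + (mu *: (sB * (i1 D * i2 (w * D)))) *+ 2
             - mu *: (sB * (i1 (D ^+ 2 + D) * i2 (s * Pc * w ^+ 2))).
Proof.
rewrite Delta_Pc Delta_H_Pc Delta_C2c w_Ei (commr_Ei commHP) (commrX 2 (commr_Ei commHP)).
by repeat split.
Qed.

End Coproduct.
End DeformedSO22.

Theorem mainTheorem6 (R : realType) (mu nu : R) (A : algType R) (s : A)
  (H P K D C1 C2 : A)
  (* E = e^{sP}, Ei = e^{-sP}, Pc = (e^{sP}-1)/s, Q = (1 - e^{-sP})/s, as s-adic sums *)
  (E Ei Pc Q : A) :
  sadic_algebra s ->
  ssum s (exp_term 1 s P) E ->
  ssum s (exp_term (-1) s P) Ei ->
  ssum s (expm1_div_term 1 s P) Pc ->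
  ssum s (expm1_div_term (-1) s P) Q ->
  (* defining relations of U_sigma(so_{mu,nu}(2,2)) *)
  lie K H = nu *: Pc ->
  lie K P = mu *: (Ei * H) ->
  lie H P = 0 ->
  lie K D = 0 ->
  lie D H = H ->
  lie D C1 = - C1 ->
  lie H C1 = - ((2 * nu) *: D) ->
  lie D P = Q ->
  lie D C2 = - C2 - mu *: (s * D ^+ 2) ->
  lie P C2 = (2 * mu) *: D ->
  lie K C1 = nu *: C2 + (mu * nu) *: (s * D ^+ 2) ->
  lie K C2 = mu *: C1 ->
  lie P C1 = - (Ei * K) - K * Ei ->
  lie H C2 = K *+ 2 + mu *: (s * (D * H + H * D)) ->
  lie C1 C2 = - (mu *: (s * (D * C1 + C1 * D))) ->
  let C2c := C2 + mu *: (s * D ^+ 2) in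
  (* undeformed relations *)
  (lie K H = nu *: Pc /\ lie K Pc = mu *: H /\ lie H Pc = 0 /\
   lie D H = H /\ lie D C1 = - C1 /\
   lie H C1 = - ((2 * nu) *: D) /\ lie D Pc = Pc /\ lie D C2c = - C2c /\
   lie Pc C2c = (2 * mu) *: D /\ lie K C1 = nu *: C2c /\ lie K C2c = mu *: C1 /\
   lie K D = 0 /\ lie H C2c = K *+ 2 /\ lie Pc C1 = - (K *+ 2) /\
   lie C1 C2c = 0)
  /\
  (* coproducts: for any s-adically complete algebra B (e.g. the completed
     tensor product U_sigma (x) U_sigma) with commuting embeddings
     i1 x = x (x) 1, i2 y = 1 (x) y, and Delta the algebra map with the given
     values on generators *)
  (forall (B : algType R) (sB : B) (Delta i1 i2 : A -> B) (w : A),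
    sadic_algebra sB ->
    alg_hom Delta -> alg_hom i1 -> alg_hom i2 ->
    Delta s = sB -> i1 s = sB -> i2 s = sB ->
    (forall x y, i1 x * i2 y = i2 y * i1 x) ->
    Delta P = i2 P + i1 P ->
    Delta D = i2 D + i1 D * i2 Ei ->
    Delta H = i2 H + i1 H * i2 E ->
    Delta C2 = i2 C2 + i1 C2 * i2 Ei ->
    Delta K = i2 K + i1 K - mu *: (sB * (i1 D * i2 (Ei * H))) ->
    Delta C1 = i2 C1 + i1 C1 * i2 Ei - (sB * (i1 D * i2 (Ei * K))) *+ 2
               + mu *: (sB ^+ 2 * (i1 (D ^+ 2 + D) * i2 (Ei ^+ 2 * H))) ->
    (* w = 1/(1 + s Pc) *)
    (1 + s * Pc) * w = 1 -> w * (1 + s * Pc) = 1 ->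
    (Delta Pc = i2 Pc + i1 Pc + sB * (i1 Pc * i2 Pc) /\
        Delta H = i2 H + i1 H + sB * (i1 H * i2 Pc) /\
        Delta D = i2 D + i1 D * i2 w /\
        Delta K = i2 K + i1 K - mu *: (sB * (i1 D * i2 (H * w))) /\
        Delta C1 = i2 C1 + i1 C1 * i2 w - (sB * (i1 D * i2 (w * K))) *+ 2
                   + mu *: (sB ^+ 2 * (i1 (D ^+ 2 + D) * i2 (H * w ^+ 2))) /\
        Delta C2c = i2 C2c + i1 C2c * i2 w + (mu *: (sB * (i1 D * i2 (w * D)))) *+ 2
                   - mu *: (sB * (i1 (D ^+ 2 + D) * i2 (s * Pc * w ^+ 2))))).
Proof.
move=> [s_central s_separated _] *; split; first exact: undeformed_relations.
by move=> B sB Delta i1 i2 w [sB_central sB_separated _] *; apply: coproducts.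
Qed.
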